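(* Let $X$ be a finite set and $H$ a real-valued function on the nonempty subsets of $X$. Suppose there is an equivalence relation $\sim$ on $X$ such that, for all disjoint nonempty $A,B\subseteq X$, the sets $A$ and $B$ are combinatorially dependent if and only if there exist $a\in A$ and $b\in B$ with $a\sim b$. Let $\mathcal P=\{C_1,\dots,C_k\}$ be the partition of $X$ into the equivalence classes of $\sim$. Then $\mathcal H(\mathcal P)\le \mathcal H(\mathcal P')$ for every partition $\mathcal P'$ of $X$; that is, $\mathcal P$ minimizes $\mathcal H$ over all partitions of $X$.
   Context: For disjoint nonempty $A,B\subseteq X$, $A$ and $B$ are called combinatorially dependent if $H(A\cup B)<H(A)+H(B)$, and combinatorially independent otherwise. For a partition $\mathcal P$ of $X$ into nonempty classes, $\mathcal H(\mathcal P)=\sum_{Y\in\mathcal P}H(Y)$. *)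

From mathcomp Require Import all_boot all_order all_algebra.
From mathcomp Require Import reals.
Set Implicit Arguments. Unset Strict Implicit. Unset Printing Implicit Defensive.
Import Order.TTheory GRing.Theory Num.Theory.
Local Open Scope ring_scope.

(* H is a function on subsets of X = [set: T]; only its values on nonempty
   subsets are ever used. *)

Definition comb_dependent (R : realType) (T : finType) (H : {set T} -> R)
  (A B : {set T}) : Prop := H (A :|: B) < H A + H B.

Definition HP (R : realType) (T : finType) (H : {set T} -> R)
  (P : {set {set T}}) : R := \sum_(Y in P) H Y.

From mathcomp Require Import all_boot all_order all_algebra.
From mathcomp Require Import reals.
Import Order.TTheory GRing.Theory Num.Theory.
Set Implicit Arguments. Unset Strict Implicit. Unset Printing Implicit Defensive.
Local Open Scope ring_scope.

(* Cut every block Y of P' along the classes C of Q into the pieces Y :&: C.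
   Pieces of one class are pairwise related, hence dependent, so gluing them
   back decreases H: H C <= sum_Y H (Y :&: C).  Pieces of one block Y lying in
   different classes are unrelated, hence independent, so gluing them increases
   H: sum_C H (Y :&: C) <= H Y.  Summing both and exchanging the double sum
   gives H(Q) <= H(P').  Empty pieces are absorbed by extending H by 0 on the
   empty set (H0). *)

Section EquivalencePartition.
Variables (T : finType) (e : rel T) (D : {set T}).
Hypothesis e_equiv : {in D & &, equivalence_rel e}.
Local Notation Q := (equivalence_partition e D).

Lemma equivalence_partition_related C :
  C \in Q -> {in C &, forall a b, e a b}.
Proof.
have /and3P [/eqP covQ trivQ _] := equivalence_partitionP e_equiv.
move=> QC a b aC bC.
have [Da Db] : a \in D /\ b \in D by rewrite -covQ; split; apply/bigcupP; exists C.
by rewrite -(pblock_equivalence_partition e_equiv Da Db) (def_pblock trivQ QC aC).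
Qed.

Lemma equivalence_partition_unrelated C1 C2 :
  C1 \in Q -> C2 \in Q -> C1 != C2 -> {in C1 & C2, forall a b, ~~ e a b}.
Proof.
have /and3P [/eqP covQ trivQ _] := equivalence_partitionP e_equiv.
move=> QC1 QC2 neqC a b aC1 bC2; apply: contra neqC => eab.
have [Da Db] : a \in D /\ b \in D.
  by rewrite -covQ; split; apply/bigcupP; [exists C1 | exists C2].
rewrite -(def_pblock trivQ QC1 aC1) -(def_pblock trivQ QC2 bC2).
by rewrite (eq_pblock _ trivQ) ?covQ // pblock_equivalence_partition.
Qed.

End EquivalencePartition.

Section CombinatorialDependence.
Variables (R : realType) (T : finType) (H : {set T} -> R) (e : rel T).
Hypothesis e_refl : reflexive e.
Hypothesis hdep : forall A B : {set T}, A != set0 -> B != set0 -> [disjoint A & B] ->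
  (comb_dependent H A B <-> exists a b, [/\ a \in A, b \in B & e a b]).

Definition H0 (A : {set T}) : R := if A == set0 then 0 else H A.

Lemma HP_H0 (P : {set {set T}}) (D : {set T}) :
  partition P D -> HP H P = \sum_(Y in P) H0 Y.
Proof.
move=> /partition0 P0; apply: eq_bigr => Y PY; rewrite /H0.
by case: eqP => // Y0; rewrite Y0 P0 in PY.
Qed.

Lemma H0_union_unrelated (A B : {set T}) :
  {in A & B, forall a b, ~~ e a b} -> H0 A + H0 B <= H0 (A :|: B).
Proof.
move=> AB; rewrite /H0.
have [-> | A0] := eqVneq A set0; first by rewrite set0U add0r.
have [-> | B0] := eqVneq B set0; first by rewrite setU0 addr0 (negbTE A0).
have AB0 : A :|: B != set0 by rewrite setU_eq0 negb_and A0.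
have disjAB : [disjoint A & B].
  apply/pred0P => x /=; apply/negP => /andP [xA xB].
  by move: (AB x x xA xB); rewrite e_refl.
rewrite (negbTE AB0) leNgt; apply/negP => /(hdep A0 B0 disjAB) [a [b [aA bB eab]]].
by move: (AB a b aA bB); rewrite eab.
Qed.

Lemma H0_union_related (A B : {set T}) :
  [disjoint A & B] -> {in A & B, forall a b, e a b} -> H0 (A :|: B) <= H0 A + H0 B.
Proof.
move=> disjAB AB; rewrite /H0.
have [-> | A0] := eqVneq A set0; first by rewrite set0U add0r.
have [-> | B0] := eqVneq B set0; first by rewrite setU0 addr0 (negbTE A0).
have AB0 : A :|: B != set0 by rewrite setU_eq0 negb_and A0.
rewrite (negbTE AB0); apply/ltW/(hdep A0 B0 disjAB).
have [a aA] := set0Pn _ A0; have [b bB] := set0Pn _ B0.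
by exists a, b; split=> //; apply: AB.
Qed.

Lemma H0_bigcup_unrelated (I : finType) (r : seq I) (f : I -> {set T}) :
    uniq r -> {in r &, forall i j, i != j -> {in f i & f j, forall a b, ~~ e a b}} ->
  \sum_(i <- r) H0 (f i) <= H0 (\bigcup_(i <- r) f i).
Proof.
elim: r => [|i r IH] /=; first by rewrite !big_nil /H0 eqxx.
move=> /andP [ir ur] unrel; rewrite !big_cons.
have unrel_i : {in f i & \bigcup_(j <- r) f j, forall a b, ~~ e a b}.
  move=> a b ai; rewrite bigcup_seq => /bigcupP [j jr bj].
  apply: unrel ai bj; rewrite ?mem_head ?in_cons ?jr ?orbT //.
  by apply: contraNneq ir => ->.
apply: le_trans _ (H0_union_unrelated unrel_i); rewrite lerD2l.
by apply: IH => // j k jr kr; apply: unrel; rewrite in_cons ?jr ?kr orbT.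
Qed.

Lemma H0_bigcup_related (I : finType) (r : seq I) (f : I -> {set T}) :
    uniq r -> {in r &, forall i j, i != j -> [disjoint f i & f j]} ->
    {in \bigcup_(i <- r) f i &, forall a b, e a b} ->
  H0 (\bigcup_(i <- r) f i) <= \sum_(i <- r) H0 (f i).
Proof.
elim: r => [|i r IH] /=; first by rewrite !big_nil /H0 eqxx.
move=> /andP [ir ur] disj rel; rewrite !big_cons.
have disj_i : [disjoint f i & \bigcup_(j <- r) f j].
  rewrite bigcup_seq; apply/bigcup_disjoint => j jr.
  apply: disj; rewrite ?mem_head ?in_cons ?jr ?orbT //.
  by apply: contraNneq ir => ->.
have rel_i : {in f i & \bigcup_(j <- r) f j, forall a b, e a b}.
  by move=> a b ai bU; apply: rel; rewrite big_cons inE ?ai ?bU ?orbT.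
apply: le_trans (H0_union_related disj_i rel_i) _; rewrite lerD2l.
apply: IH => // [j k jr kr | a b aU bU].
  by apply: disj; rewrite in_cons ?jr ?kr orbT.
by apply: rel; rewrite big_cons inE ?aU ?bU orbT.
Qed.

End CombinatorialDependence.

Theorem lemma1 (R : realType) (T : finType) (H : {set T} -> R) (e : rel T)
  (he : equivalence_rel e)
  (hdep : forall A B : {set T}, A != set0 -> B != set0 -> [disjoint A & B] ->
     (comb_dependent H A B <-> exists a b, [/\ a \in A, b \in B & e a b]))
  (P' : {set {set T}}) (hP' : partition P' [set: T]) :
  HP H (equivalence_partition e [set: T]) <= HP H P'.
Proof.
have e_equiv : {in [set: T] & &, equivalence_rel e} by move=> x y z _ _ _; apply: he.
have e_refl : reflexive e := fun x => (he x x x).1.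
have QP := equivalence_partitionP e_equiv.
set Q := equivalence_partition e [set: T] in QP *.
have /and3P [_ trivP' _] := hP'.
rewrite (HP_H0 H QP) (HP_H0 H hP').
apply: (@le_trans _ _ (\sum_(C in Q) \sum_(Y in P') H0 H (Y :&: C))).
- apply: ler_sum => C QC.
  have pieces : \bigcup_(Y in P') (Y :&: C) = C.
    by rewrite -big_distrl /= -/(cover P') (cover_partition hP') setTI.
  rewrite -{1}pieces -!big_enum /=.
  apply: (H0_bigcup_related (f := fun Y => Y :&: C) hdep (enum_uniq _)).
  + move=> Y1 Y2; rewrite !mem_enum => P'Y1 P'Y2 neqY.
    apply: disjointWl (subsetIl _ _) _; apply: disjointWr (subsetIl _ _) _.
    exact: (trivIsetP trivP').
  + by rewrite big_enum pieces; apply: (equivalence_partition_related e_equiv QC).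
rewrite exchange_big; apply: ler_sum => Y P'Y.
have pieces : \bigcup_(C in Q) (Y :&: C) = Y.
  by rewrite -big_distrr /= -/(cover Q) (cover_partition QP) setIT.
rewrite -{2}pieces -!big_enum.
apply: (H0_bigcup_unrelated (f := fun C => Y :&: C) e_refl hdep (enum_uniq _)).
move=> C1 C2; rewrite !mem_enum => QC1 QC2 neqC a b /setIP [_ aC1] /setIP [_ bC2].
exact: (equivalence_partition_unrelated e_equiv QC1 QC2 neqC aC1 bC2).
Qed.
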